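(* Let $N,n,m,p,l$ be positive integers, $A\in\mathbb{R}^{n\times n}$, $B\in\mathbb{R}^{n\times p}$, $C\in\mathbb{R}^{m\times n}$, $H\in\mathbb{R}^{n\times m}$, $W=[w_{ij}]\in\mathbb{R}^{N\times N}$ with $w_{ii}=0$ for all $i$, $\Delta=\mathrm{diag}(\delta_1,\dots,\delta_N)$ with $\delta_i\in\{0,1\}$, and $h>0$. Put $\mathcal{B}(h)=\int_0^h e^{A\tau}d\tau\,B$, $\mathcal{H}(h)=\int_0^h e^{A\tau}d\tau\,HC$, $\Phi_s=I_N\otimes e^{Ah}+W\otimes\mathcal{H}(h)$, $\Psi_s=\Delta\otimes\mathcal{B}(h)$, $\tilde\Phi_s=\Phi_s^l$ and $\tilde\Psi_s=(\Phi_s^{l-1}+\Phi_s^{l-2}+\dots+\Phi_s+I)\Psi_s$. Suppose: (1) for every eigenvalue $\theta$ of $\Phi_s$, $\sum_{c=0}^{l-1}\theta^c\neq0$; (2) for every eigenvalue $\theta$ of $\Phi_s$ and every nonzero row vector $\eta\in\mathbb{C}^{1\times Nn}$ with $\eta\tilde\Phi_s=\theta^l\eta$, one has $\eta(\Delta\otimes\mathcal{B}(h))\neq0$. Then the discrete-time system $X(k+1)=\tilde\Phi_sX(k)+\tilde\Psi_sU(k)$ is controllable.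
   Context: This is the networked transmission multi-rate sampled-data system: transmission sampling period $h$, control sampling period $lh$, written as a discrete-time system with period $lh$. The discrete-time system is called controllable if every initial state can be steered to the origin in finitely many steps. $\otimes$ is the Kronecker product. *)

From HB Require Import structures.
From mathcomp Require Import all_boot all_order all_algebra.
From mathcomp Require Import all_classical all_reals all_analysis.
From mathcomp Require Import mxtens complex.
Set Implicit Arguments.
Unset Strict Implicit.
Unset Printing Implicit Defensive.
Import Order.TTheory GRing.Theory Num.Theory.
Import numFieldNormedType.Exports.
Local Open Scope ring_scope.
Local Open Scope classical_set_scope.

Notation kron := tensmx.

Definition expmx (R : realType) (n : nat) (A : 'M[R]_n) (t : R) : 'M[R]_n :=
  \matrix_(i, j) limn (fun K : nat =>
      (\sum_(k < K) ((t ^+ k / (k`!)%:R) *: (A ^+ k))) i j).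

Definition intexpmx (R : realType) (n : nat) (A : 'M[R]_n) (h : R) : 'M[R]_n :=
  \matrix_(i, j) (\int[lebesgue_measure]_(tau in `[0, h]) (expmx A tau i j)).

Fixpoint traj (R : pzRingType) (q r : nat) (F : 'M[R]_q) (G : 'M[R]_(q, r))
  (x0 : 'cV[R]_q) (U : nat -> 'cV[R]_r) (k : nat) : 'cV[R]_q :=
  match k with
  | 0 => x0
  | k'.+1 => F *m traj F G x0 U k' + G *m U k'
  end.

Definition controllable (R : pzRingType) (q r : nat) (F : 'M[R]_q) (G : 'M[R]_(q, r)) :=
  forall x0 : 'cV[R]_q, exists (K : nat) (U : nat -> 'cV[R]_r), traj F G x0 U K = 0.

Definition cmx (R : rcfType) (a b : nat) (M : 'M[R]_(a, b)) : 'M[R[i]]_(a, b) :=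
  map_mx (fun x : R => (x%:C)%C) M.

From HB Require Import structures.
From mathcomp Require Import all_boot all_order all_algebra.
From mathcomp Require Import all_classical all_reals all_analysis.
From mathcomp Require Import mxtens complex.
Set Implicit Arguments.
Unset Strict Implicit.
Unset Printing Implicit Defensive.
Import Order.TTheory GRing.Theory Num.Theory.
Import numFieldNormedType.Exports.
Local Open Scope ring_scope.

(* A real pair (F, G) of order q is controllable as soon as no complex left
   eigenvector of F is annihilated by G (Hautus test).  The row vectors v with
   v F^k G = 0 for all k form an F-stable space (by Cayley-Hamilton, k < q is
   enough); if it were nonzero it would contain an eigenvector of F.  Hence it
   is zero, the columns of the F^k G, k < q, span the state space, and writing
   -F^q x0 in terms of them steers x0 to 0 in q steps.

   For the lifted pair (Phi^l, S Psi) with S = sum_(c < l) Phi^c, let eta be a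
   left eigenvector of Phi^l for mu.  By (1) no root of sum_(c < l) X^c is an
   eigenvalue of Phi, so eta S <> 0; eta S is again an eigenvector of Phi^l for
   mu, so it is annihilated by X^l - mu evaluated at Phi, whence some eigenvalue
   theta of Phi has theta^l = mu and (2) gives eta S Psi <> 0. *)

Lemma traj_closed_form (R : pzRingType) q r (F : 'M[R]_q) (G : 'M[R]_(q, r))
    x0 U K :
  traj F G x0 U K = F ^+ K *m x0 + \sum_(j < K) F ^+ (K - j.+1) *m G *m U j.
Proof.
elim: K => [|K IHK] /=; first by rewrite expr0 mul1mx big_ord0 addr0.
have FX k : F *m F ^+ k = F ^+ k.+1 by rewrite exprS.
rewrite IHK big_ord_recr /= subnn expr0 mul1mx mulmxDr mulmxA FX.
rewrite mulmx_sumr -addrA; congr (_ + (_ + _)); apply: eq_bigr => j _.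
by rewrite !mulmxA FX subSS -subSn.
Qed.

Lemma controllable_krylov_span (R : pzRingType) q r (F : 'M[R]_q)
    (G : 'M[R]_(q, r)) :
  (forall x : 'cV_q, exists u : 'I_q -> 'cV_r,
     x = \sum_(k < q) F ^+ k *m G *m u k) ->
  controllable F G.
Proof.
move=> span x0; case: q => [|q] in F G span x0 *.
  by exists 0%N, (fun=> 0); rewrite flatmx0.
have [u Fx0] := span (- (F ^+ q.+1 *m x0)).
exists q.+1, (fun j => u (rev_ord (inord j))); rewrite traj_closed_form.
rewrite (reindex_inj rev_ord_inj) /= in Fx0.
rewrite (eq_bigr (fun j => F ^+ rev_ord j *m G *m u (rev_ord j))) -?Fx0 ?subrr //.
by move=> j _; rewrite inord_val.
Qed.

Lemma horner_mx_coef (R : comNzRingType) n (A : 'M[R]_n.+1) (p : {poly R}) :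
  horner_mx A p = \sum_(i < size p) p`_i *: A ^+ i.
Proof.
rewrite -{1}(coefK p) poly_def rmorph_sum; apply: eq_bigr => i _.
by rewrite -mul_polyC rmorphM rmorphXn /= horner_mx_C horner_mx_X -mul_scalar_mx.
Qed.

Section Krylov.

Variables (K : fieldType) (q r : nat).

Lemma Cayley_Hamilton_krylov (F : 'M[K]_q.+1) (G : 'M[K]_(q.+1, r))
    (v : 'rV_q.+1) :
  (forall k, (k < q.+1)%N -> v *m (F ^+ k *m G) = 0) ->
  forall k, v *m (F ^+ k *m G) = 0.
Proof.
move=> vFG0 k; set p := 'X^k %% char_poly F.
have Fk : F ^+ k = horner_mx F p.
  transitivity (horner_mx F 'X^k); first by rewrite rmorphXn /= horner_mx_X.
  rewrite {1}(divp_eq 'X^k (char_poly F)) rmorphD rmorphM /=.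
  by rewrite Cayley_Hamilton mulr0 add0r.
have size_p : (size p <= q.+1)%N.
  rewrite -ltnS -(size_char_poly F) ltn_modp monic_neq0 //.
  exact: char_poly_monic.
rewrite Fk horner_mx_coef mulmx_suml mulmx_sumr big1 // => i _.
by rewrite -scalemxAl -scalemxAr vFG0 ?scaler0 // (leq_trans (ltn_ord i)).
Qed.

Lemma krylov_span (F : 'M[K]_q) (G : 'M[K]_(q, r)) :
  (forall v : 'rV_q, (forall k, (k < q)%N -> v *m (F ^+ k *m G) = 0) -> v = 0) ->
  forall x : 'cV_q, exists u : 'I_q -> 'cV_r,
    x = \sum_(k < q) F ^+ k *m G *m u k.
Proof.
move=> ann0 x; pose S := (\sum_(k < q) <<(F ^+ k *m G)^T>>)%MS.
have S_full : row_full S.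
  have : row_free S^T.
    apply: inj_row_free => v vS0; apply: ann0 => k lt_kq.
    have /submxP[w FkG] : ((F ^+ k *m G)^T <= S)%MS.
      by rewrite (sumsmx_sup (Ordinal lt_kq)) ?genmxE.
    apply: trmx_inj; rewrite trmx_mul FkG -mulmxA -[S]trmxK -trmx_mul vS0.
    by rewrite !trmx0 mulmx0.
  by rewrite /row_free mxrank_tr.
have /mxalgebra.sub_sums_genmxP[u xS] := submx_full x^T S_full.
exists (fun k => (u k)^T); rewrite -[x]trmxK xS raddf_sum.
by apply: eq_bigr => k _; rewrite /= trmx_mul trmxK.
Qed.

End Krylov.

Section ClosedFieldEigen.

Variables (K : closedFieldType) (q : nat) (F : 'M[K]_q.+1).

Lemma stable_pred_eigenvector (P : 'rV_q.+1 -> Prop) (p : {poly K})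
    (v : 'rV_q.+1) :
  (forall w z, P w -> P (w *m (F - z%:M))) ->
  P v -> v != 0 -> p != 0 -> v *m horner_mx F p = 0 ->
  exists z w, [/\ root p z, P w, w != 0 & w *m F = z *: w].
Proof.
move=> PFz Pv v0 p0; have [rs p_split] := closed_field_poly_normal p.
have lc0 : lead_coef p != 0 by rewrite lead_coef_eq0.
rewrite {1}p_split linearZ /= -scalemxAr => /eqP.
rewrite scaler_eq0 (negbTE lc0) /= => /eqP v_ann.
suff [z [w [z_rs Pw w0 wF]]] :
    exists z w, [/\ z \in rs, P w, w != 0 & w *m F = z *: w].
  by exists z, w; rewrite p_split rootZ // root_prod_XsubC.
elim: rs v Pv v0 v_ann {p_split} => [|z rs IHrs] v Pv v0.
  by rewrite big_nil rmorph1 mulmx1 => v_eq0; rewrite v_eq0 eqxx in v0.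
rewrite big_cons rmorphM rmorphB /= horner_mx_X horner_mx_C -mulmxE mulmxA.
have [vFz0 _ | vFz0 /(IHrs _ (PFz _ z Pv) vFz0)] := eqVneq (v *m (F - z%:M)) 0.
  exists z, v; split; rewrite ?mem_head //.
  by apply/eqP; rewrite -subr_eq0 -mul_mx_scalar -mulmxBr vFz0.
by case=> [y [w [y_rs Pw w0 wF]]]; exists y, w; rewrite inE y_rs orbT.
Qed.

Lemma eigenvalue_root_annihilating (p : {poly K}) (v : 'rV_q.+1) :
  v != 0 -> p != 0 -> v *m horner_mx F p = 0 ->
  exists2 z, root p z & eigenvalue F z.
Proof.
move=> v0 p0 vp0.
have [z [w [pz _ w0 wF]]] :=
  @stable_pred_eigenvector (fun=> True) p v (fun _ _ _ => I) I v0 p0 vp0.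
by exists z => //; apply/eigenvalueP; exists w.
Qed.

Lemma mulmx_sum_powers_neq0 l (v : 'rV_q.+1) :
  (0 < l)%N -> (forall z, eigenvalue F z -> \sum_(c < l) z ^+ c != 0) ->
  v != 0 -> v *m \sum_(c < l) F ^+ c != 0.
Proof.
move=> l0 sum_neq0 v0; pose s : {poly K} := \sum_(c < l) 'X^c.
have s_horner z : s.[z] = \sum_(c < l) z ^+ c.
  by rewrite horner_sum; apply: eq_bigr => c _; rewrite hornerXn.
have s0 : s != 0.
  apply/eqP => s_eq0; move: (s_horner 0); rewrite s_eq0 horner0.
  rewrite -(prednK l0) big_ord_recl expr0 big1 => [|c _]; last by rewrite expr0n.
  by rewrite addr0 => /esym/eqP; rewrite oner_eq0.
have Fs : horner_mx F s = \sum_(c < l) F ^+ c.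
  by rewrite rmorph_sum; apply: eq_bigr => c _; rewrite rmorphXn /= horner_mx_X.
apply/eqP => vs0; have vs0' : v *m horner_mx F s = 0 by rewrite Fs.
have [z sz /sum_neq0] := eigenvalue_root_annihilating v0 s0 vs0'.
by rewrite -s_horner (rootP sz) eqxx.
Qed.

Lemma eigenvalue_root_of_pow l (mu : K) (v : 'rV_q.+1) :
  (0 < l)%N -> v != 0 -> v *m F ^+ l = mu *: v ->
  exists2 z, eigenvalue F z & z ^+ l = mu.
Proof.
move=> l0 v0 vFl; have p0 : 'X^l - mu%:P != 0 := monic_neq0 (monicXnsubC mu l0).
have vp0 : v *m horner_mx F ('X^l - mu%:P) = 0.
  rewrite rmorphB rmorphXn /= horner_mx_X horner_mx_C mulmxBr vFl.
  by rewrite mul_mx_scalar subrr.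
have [z pz ev] := eigenvalue_root_annihilating v0 p0 vp0.
by exists z => //; apply/eqP; move: pz; rewrite /root !hornerE subr_eq0.
Qed.

End ClosedFieldEigen.

Section Hautus.

Variable R : rcfType.

Lemma cmxM a b c (M : 'M[R]_(a, b)) (M' : 'M[R]_(b, c)) :
  cmx (M *m M') = cmx M *m cmx M'.
Proof. exact: map_mxM. Qed.

Lemma cmxX a (M : 'M[R]_a) k : cmx (M ^+ k) = cmx M ^+ k.
Proof. exact: rmorphXn. Qed.

Lemma cmx_sum a b I (r : seq I) (P : pred I) (M : I -> 'M[R]_(a, b)) :
  cmx (\sum_(i <- r | P i) M i) = \sum_(i <- r | P i) cmx (M i).
Proof. exact: raddf_sum. Qed.

Definition hautus q r (F : 'M[R]_q) (G : 'M[R]_(q, r)) :=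
  forall (mu : R[i]) (xi : 'rV_q),
    xi != 0 -> xi *m cmx F = mu *: xi -> xi *m cmx G != 0.

Lemma hautus_krylov_annihilator q r (F : 'M[R]_q) (G : 'M[R]_(q, r)) :
  hautus F G ->
  forall v : 'rV_q, (forall k, (k < q)%N -> v *m (F ^+ k *m G) = 0) -> v = 0.
Proof.
case: q F G => [|q] F G FG_hautus v vFG0; first exact: thinmx0.
apply/eqP; apply: contraT => v0.
pose P (xi : 'rV[R[i]]_q.+1) := forall k, xi *m (cmx F ^+ k *m cmx G) = 0.
have PFz xi z : P xi -> P (xi *m (cmx F - z%:M)).
  move=> Pxi k; rewrite mulmxBr mulmxBl mul_mx_scalar -scalemxAl Pxi scaler0.
  by rewrite subr0 -mulmxA (mulmxA (cmx F)) -[cmx F *m _]/(_ * _) -exprS Pxi.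
have Pv : P (cmx v).
  move=> k; rewrite -cmxX -!cmxM.
  by rewrite (Cayley_Hamilton_krylov vFG0) [cmx 0]map_mx0.
have v'0 : cmx v != 0 by rewrite map_mx_eq0.
have p0 : char_poly (cmx F) != 0 by rewrite monic_neq0 ?char_poly_monic.
have vCH0 : cmx v *m horner_mx (cmx F) (char_poly (cmx F)) = 0.
  by rewrite Cayley_Hamilton mulmx0.
have [z [w [_ Pw w0 wF]]] := stable_pred_eigenvector PFz Pv v'0 p0 vCH0.
have := Pw 0%N; rewrite expr0 mul1mx => wG0.
by have := FG_hautus z w w0 wF; rewrite wG0 eqxx.
Qed.

Theorem hautus_controllable q r (F : 'M[R]_q) (G : 'M[R]_(q, r)) :
  hautus F G -> controllable F G.
Proof.
move=> FG_hautus; apply: controllable_krylov_span; apply: krylov_span.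
exact: hautus_krylov_annihilator.
Qed.

Lemma controllable_lifted q r (Phi : 'M[R]_q) (Psi : 'M[R]_(q, r)) l :
  (0 < l)%N ->
  (forall theta : R[i], eigenvalue (cmx Phi) theta ->
     \sum_(c < l) theta ^+ c != 0) ->
  (forall theta : R[i], eigenvalue (cmx Phi) theta ->
     forall eta : 'rV[R[i]]_q, eta != 0 ->
       eta *m cmx (Phi ^+ l) = theta ^+ l *: eta -> eta *m cmx Psi != 0) ->
  controllable (Phi ^+ l) ((\sum_(c < l) Phi ^+ c) *m Psi).
Proof.
move=> l0 sum_neq0 Psi_hautus; apply: hautus_controllable => mu xi xi0.
case: q => [|q] in Phi Psi xi xi0 sum_neq0 Psi_hautus *.
  by rewrite thinmx0 eqxx in xi0.
set S := \sum_(c < l) cmx Phi ^+ c.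
have cmxS : cmx (\sum_(c < l) Phi ^+ c) = S.
  by rewrite cmx_sum; apply: eq_bigr => c _; rewrite cmxX.
have S_comm : S *m cmx Phi ^+ l = cmx Phi ^+ l *m S.
  rewrite mulmx_suml mulmx_sumr; apply: eq_bigr => c _.
  by rewrite !mulmxE -!exprD addnC.
rewrite cmxX cmxM cmxS mulmxA => xi_eig.
have xiS0 : xi *m S != 0 by apply: mulmx_sum_powers_neq0.
have xiS_eig : xi *m S *m cmx Phi ^+ l = mu *: (xi *m S).
  by rewrite -mulmxA S_comm mulmxA xi_eig scalemxAl.
have [theta ev theta_l] := eigenvalue_root_of_pow l0 xiS0 xiS_eig.
by apply: Psi_hautus ev _ xiS0 _; rewrite cmxX theta_l.
Qed.

End Hautus.

Theorem corollary13 (R : realType) (N n m p l : nat)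
  (A : 'M[R]_n) (B : 'M[R]_(n, p)) (C : 'M[R]_(m, n)) (H : 'M[R]_(n, m))
  (W : 'M[R]_N) (delta : 'I_N -> bool) (h : R) :
  (0 < N)%N -> (0 < n)%N -> (0 < m)%N -> (0 < p)%N -> (0 < l)%N ->
  (forall i : 'I_N, W i i = 0) ->
  0 < h ->
  let Bh : 'M[R]_(n, p) := intexpmx A h *m B in
  let Hh : 'M[R]_n := intexpmx A h *m (H *m C) in
  let Delta : 'M[R]_N := diag_mx (\row_i (delta i)%:R) in
  let Phi : 'M[R]_(N * n) := kron (1%:M : 'M[R]_N) (expmx A h) + kron W Hh in
  let Psi : 'M[R]_(N * n, N * p) := kron Delta Bh in
  let Phit : 'M[R]_(N * n) := Phi ^+ l in
  let Psit : 'M[R]_(N * n, N * p) := (\sum_(c < l) Phi ^+ c) *m Psi in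
  (forall theta : R[i], eigenvalue (cmx Phi) theta ->
     \sum_(c < l) theta ^+ c != 0) ->
  (forall theta : R[i], eigenvalue (cmx Phi) theta ->
     forall eta : 'rV[R[i]]_(N * n), eta != 0 ->
       eta *m cmx Phit = theta ^+ l *: eta ->
       eta *m cmx (kron Delta Bh) != 0) ->
  controllable Phit Psit.
Proof.
move=> _ _ _ _ l0 _ _ Bh Hh Delta Phi Psi Phit Psit sum_neq0 Psi_hautus.
exact: controllable_lifted l0 sum_neq0 Psi_hautus.
Qed.
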